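(* Let $\lambda>0$ and consider the problem $\min_{x\in\mathbb{R}} f(x)=\frac{\lambda}{2}x^2$, whose minimizer is $x^\star=0$. Let $a,b\in\mathbb{R}$ satisfy $a^2+4b\le 0$, and consider the optimization method $x_{k+1}=a x_k+b x_{k-1}$ ($k\ge 1$), started from arbitrary $x_0,x_1\in\mathbb{R}$. Assume the method is convergent. Then $$V(x_k,x_{k-1},x_{k-2})=x_{k-1}^2-x_k x_{k-2}$$ is a Lyapunov function for this method.
   Context: The method is called convergent if $x_k\to 0$ for every choice of initial values $x_0,x_1$; equivalently, the iteration matrix $M=\begin{bmatrix} a & b\\ 1 & 0\end{bmatrix}$ (which maps $(x_k,x_{k-1})^T$ to $(x_{k+1},x_k)^T$) has spectral radius $\rho(M)<1$. A function $V(x_k,x_{k-1},x_{k-2})$ is called a Lyapunov function for the method if, along every trajectory of the method, $V(x_k,x_{k-1},x_{k-2})\ge 0$ for all $k\ge 2$ and $V(x_{k+1},x_k,x_{k-1})\le V(x_k,x_{k-1},x_{k-2})$ for all $k\ge 2$ (i.e. it is nonnegative and monotonically non-increasing along the iterates). *)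

From Stdlib Require Import Reals Lra Lia.
Open Scope R_scope.

Definition method_traj (a b : R) (x : nat -> R) : Prop :=
  forall k : nat, (1 <= k)%nat -> x (S k) = a * x k + b * x (k - 1)%nat.

Definition convergent (a b : R) : Prop :=
  forall x : nat -> R, method_traj a b x -> Un_cv x 0.

Definition V (xk xk1 xk2 : R) : R := xk1 ^ 2 - xk * xk2.

Definition is_lyapunov (a b : R) (W : R -> R -> R -> R) : Prop :=
  forall x : nat -> R, method_traj a b x ->
    forall k : nat, (2 <= k)%nat ->
      0 <= W (x k) (x (k - 1)%nat) (x (k - 2)%nat) /\
      W (x (S k)) (x k) (x (k - 1)%nat) <= W (x k) (x (k - 1)%nat) (x (k - 2)%nat).

(* Along a trajectory, V (x (k+1)) (x k) (x (k-1)) = -b * V (x k) (x (k-1)) (x (k-2)).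
   The condition a^2 + 4b <= 0 makes 4V = (2 x_(k-1) - a x_(k-2))^2 - (a^2 + 4b) x_(k-2)^2
   a sum of squares, so V >= 0, and V is non-increasing as soon as b >= -1.  Convergence
   forces b > -1: otherwise the trajectory started from (0, 1) keeps V >= 1, whereas V
   tends to 0 with the iterates. *)

From Stdlib Require Import Reals Lra Lia.
Open Scope R_scope.

Lemma V_recurrence (a b u v : R) :
  V (a * (a * v + b * u) + b * v) (a * v + b * u) v = - b * V (a * v + b * u) v u.
Proof. unfold V; ring. Qed.

Lemma V_recurrence_ge0 (a b u v : R) :
  a ^ 2 + 4 * b <= 0 -> 0 <= V (a * v + b * u) v u.
Proof.
  intros hab; unfold V.
  assert (Hsq : 4 * (v ^ 2 - (a * v + b * u) * u)
                = (2 * v - a * u) ^ 2 + - (a ^ 2 + 4 * b) * u ^ 2) by ring.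
  assert (Hpos : 0 <= - (a ^ 2 + 4 * b) * u ^ 2)
    by (apply Rmult_le_pos; [lra | apply pow2_ge_0]).
  pose proof (pow2_ge_0 (2 * v - a * u)).
  lra.
Qed.

Lemma method_traj_SS (a b : R) (x : nat -> R) (n : nat) :
  method_traj a b x -> x (S (S n)) = a * x (S n) + b * x n.
Proof.
  intros hx; rewrite hx by lia.
  now replace (S n - 1)%nat with n by lia.
Qed.

Fixpoint fundamental_traj (a b : R) (n : nat) : R :=
  match n with
  | O => 0
  | S O => 1
  | S (S m as p) => a * fundamental_traj a b p + b * fundamental_traj a b m
  end.

Lemma fundamental_traj_method (a b : R) : method_traj a b (fundamental_traj a b).
Proof.
  intros [|k] hk; [lia|].
  now replace (S k - 1)%nat with k by lia.
Qed.

Lemma V_fundamental_traj_ge1 (a b : R) (n : nat) :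
  b <= -1 ->
  1 <= V (fundamental_traj a b (S (S n))) (fundamental_traj a b (S n))
         (fundamental_traj a b n).
Proof.
  intros hb; induction n as [|n IH].
  - simpl; unfold V; lra.
  - change (fundamental_traj a b (S (S (S n))))
      with (a * fundamental_traj a b (S (S n)) + b * fundamental_traj a b (S n)).
    change (fundamental_traj a b (S (S n)))
      with (a * fundamental_traj a b (S n) + b * fundamental_traj a b n) in *.
    rewrite V_recurrence; nra.
Qed.

Lemma convergent_b_gt_m1 (a b : R) : convergent a b -> -1 < b.
Proof.
  intros hconv; apply Rnot_le_lt; intros hb.
  destruct (hconv _ (fundamental_traj_method a b) (1 / 2) ltac:(lra)) as [N HN].
  pose proof (V_fundamental_traj_ge1 a b N hb) as HV.
  pose proof (HN N ltac:(lia)) as H0.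
  pose proof (HN (S N) ltac:(lia)) as H1.
  pose proof (HN (S (S N)) ltac:(lia)) as H2.
  unfold R_dist, V in *; rewrite !Rminus_0_r in *.
  apply Rabs_def2 in H0, H1, H2.
  nra.
Qed.

Theorem theorem1 (lambda a b : R) (hlam : 0 < lambda)
  (hab : a ^ 2 + 4 * b <= 0) (hconv : convergent a b) :
  is_lyapunov a b V.
Proof.
  pose proof (convergent_b_gt_m1 a b hconv) as hb.
  intros x hx [|[|n]] hk; [lia|lia|].
  replace (S (S n) - 1)%nat with (S n) by lia.
  replace (S (S n) - 2)%nat with n by lia.
  rewrite (method_traj_SS a b x (S n) hx), (method_traj_SS a b x n hx).
  pose proof (V_recurrence_ge0 a b (x n) (x (S n)) hab) as hV.
  split; [exact hV|].
  rewrite V_recurrence; nra.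
Qed.
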